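(* Let $(\mathcal C_n)_{n\in\mathbb N_0}$ be a sequence of $\sigma$-subfields with $\mathcal C_n\to\mathcal C_0$ strongly as $n\to\infty$. Let $I$ be an arbitrary index set and let $(\mathcal B_n^i)_{(n,i)\in\mathbb N_0\times I}$ be $\sigma$-subfields such that, for each $i\in I$, $\mathcal B_n^i\to\mathcal B_0^i$ weakly as $n\to\infty$, and such that, for each $n\in\mathbb N$, the family $(\mathcal B_n^i)_{i\in I}$ is conditionally independent given $\mathcal C_n$ (under $\mathbb P$). Then the family $(\mathcal B_0^i)_{i\in I}$ is conditionally independent given $\mathcal C_0$.
   Context: Let $(\Omega,\mathcal F,\mathbb P)$ be a (not necessarily complete) probability space and $\mathcal N:=\{F\in\mathcal F:\mathbb P(F)=0\}$. A $\sigma$-subfield is a sub-$\sigma$-field $\mathcal A\subset\mathcal F$ which is $\mathbb P$-complete, i.e. $\mathcal A=\sigma(\mathcal A\cup\mathcal N)$. For a $\sigma$-subfield $\mathcal A$ and integrable $f$, $\mathbb P_{\mathcal A}f:=\mathbb E^{\mathbb P}[f\mid\mathcal A]$. For $\sigma$-subfields $(\mathcal B_n)_{n\in\mathbb N_0}$: $\mathcal B_n\to\mathcal B_0$ weakly if $\mathbb P_{\mathcal B_n}\mathbb 1_A\to\mathbb 1_A$ in $\mathbb P$-probability for every $A\in\mathcal B_0$; $\mathcal B_n\to\mathcal B_0$ strongly if $\mathbb P_{\mathcal B_n}\mathbb 1_A\to\mathbb P_{\mathcal B_0}\mathbb 1_A$ in $\mathbb P$-probability for every $A\in\mathcal F$.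 *)

From HB Require Import structures.
From mathcomp Require Import all_boot all_order all_algebra.
From mathcomp Require Import all_classical all_reals all_analysis.
Set Implicit Arguments. Unset Strict Implicit. Unset Printing Implicit Defensive.
Import Order.TTheory GRing.Theory Num.Theory.
Import numFieldNormedType.Exports.
Local Open Scope classical_set_scope.
Local Open Scope ring_scope.

Section condexp_defs.
Context {d : measure_display} {T : measurableType d} {R : realType}.
Variable P : probability T R.

Definition Pnull : set (set T) := [set N | measurable N /\ P N = 0%E].

(* sigma-subfield: sub-sigma-field of F which is P-complete, A = sigma(A u N) *)
Definition sigma_subfield (A : set (set T)) : Prop :=
  A `<=` measurable /\ A = <<s A `|` Pnull >>.

Definition sub_measurable (A : set (set T)) (g : T -> R) : Prop :=
  forall Y : set R, measurable Y -> A (g @^-1` Y).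

Definition is_condexp (A : set (set T)) (f g : T -> R) : Prop :=
  [/\ sub_measurable A g, P.-integrable setT (EFin \o g) &
      forall B, A B -> (\int[P]_(x in B) (g x)%:E = \int[P]_(x in B) (f x)%:E)%E].

(* P_A f : a (choice of) version of the conditional expectation;
   0 if no version exists (never happens for integrable f) *)
Definition condexp (A : set (set T)) (f : T -> R) : T -> R :=
  xget (fun _ => 0) [set g | is_condexp A f g].

Definition cvg_in_prob (g : nat -> T -> R) (f : T -> R) : Prop :=
  forall eps : R, 0 < eps ->
    (fun n => P [set x | eps <= `|g n x - f x|]) @ \oo --> 0%E.

Definition weak_cvg (B : nat -> set (set T)) (B0 : set (set T)) : Prop :=
  forall A, B0 A -> cvg_in_prob (fun n => condexp (B n) \1_A) \1_A.

Definition strong_cvg (B : nat -> set (set T)) (B0 : set (set T)) : Prop :=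
  forall A, measurable A ->
    cvg_in_prob (fun n => condexp (B n) \1_A) (condexp B0 \1_A).

(* conditional independence of (B i)_{i in I} given C: for every finite
   subfamily, enumerated injectively by j : 'I_k -> I, and every choice of
   events S m in B (j m), P_C 1_{cap S} = prod P_C 1_{S m} a.s. *)
Definition cond_indep (I : Type) (B : I -> set (set T)) (C : set (set T)) : Prop :=
  forall (k : nat) (j : 'I_k -> I), injective j ->
  forall S : 'I_k -> set T, (forall m, B (j m) (S m)) ->
  {ae P, forall x, condexp C \1_(\bigcap_(m in [set: 'I_k]) S m) x
                   = \prod_(m < k) condexp C \1_(S m) x}.

End condexp_defs.

(* Each S_m in B_0^(j m) is approximated by the threshold set
   S_m^n := {P_{B_n^(j m)} 1_{S_m} >= 1/2} in B_n^(j m); weak convergence gives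
   P(S_m^n \ S_m) + P(S_m \ S_m^n) -> 0.  Conditional probabilities of indicators
   are 1-Lipschitz in the set, uniformly in the sigma-subfield:
   e P(|P_C 1_X - P_C 1_Y| >= e) <= P(X \ Y) + P(Y \ X).  Together with strong
   convergence of C_n this yields P_{C_n} 1_{S_m^n} -> P_{C_0} 1_{S_m} and
   P_{C_n} 1_{cap_m S_m^n} -> P_{C_0} 1_{cap_m S_m} in probability.  Since
   conditional probabilities are a.s. bounded by 1, convergence in probability
   passes to their finite products.  For n >= 1 the two sequences agree a.s. by
   conditional independence, and limits in probability are a.s. unique. *)

From HB Require Import structures.
From mathcomp Require Import all_boot all_order all_algebra.
From mathcomp Require Import all_classical all_reals all_analysis.
From mathcomp Require Import measurable_realfun ring lra.
Set Implicit Arguments. Unset Strict Implicit. Unset Printing Implicit Defensive.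
Import Order.TTheory GRing.Theory Num.Theory.
Import numFieldNormedType.Exports.
Local Open Scope classical_set_scope.
Local Open Scope ring_scope.

Section convergence_in_probability.
Context {d} {T : measurableType d} {R : realType} (P : probability T R).
Implicit Types (e : R) (f g h : T -> R) (u v w : nat -> T -> R).

Lemma measurable_norm_ge h e : measurable_fun setT h ->
  measurable [set x | e <= `|h x|].
Proof.
move=> mh; rewrite (_ : [set x | _] = setT `&` (fun x => `|h x|) @^-1` `[e, +oo[).
  exact: (measurableT_comp (@normr_measurable R setT) mh) measurableT _
    (measurable_itv _).
by apply/seteqP; split => x /=; rewrite ?in_itv /= ?andbT; [move=> ?; split|case].
Qed.

Lemma cvge0_squeeze (a b : nat -> \bar R) : (forall n, 0 <= a n)%E ->
  (\forall n \near \oo, a n <= b n)%E -> b @ \oo --> 0%E -> a @ \oo --> 0%E.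
Proof.
move=> a0 ab b0; apply: (@squeeze_cvge _ _ _ _ (cst 0%E) _ b) => //.
- by apply: filterS ab => n ->; rewrite a0.
- exact: cvg_cst.
Qed.

Lemma le_measure_norm_ge_split h f g e : measurable_fun setT f ->
  measurable_fun setT g -> measurable_fun setT h ->
  {ae P, forall x, `|h x| <= `|f x| + `|g x|} ->
  (P [set x | e <= `|h x|]%R <=
   P [set x | e / 2 <= `|f x|]%R + P [set x | e / 2 <= `|g x|]%R)%E.
Proof.
move=> mf mg mh [N [mN N0 hN]].
set F := [set x | e / 2 <= `|f x|]; set G := [set x | e / 2 <= `|g x|].
have mF : measurable F by exact: measurable_norm_ge.
have mG : measurable G by exact: measurable_norm_ge.
apply: (@le_trans _ _ (P ((F `|` G) `|` N))).
  apply: le_measure; rewrite ?inE; [exact: measurable_norm_ge|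
    by apply: measurableU => //; exact: measurableU|].
  move=> x /= ehx.
  have [hfg|/hN] := pselect (`|h x| <= `|f x| + `|g x|); last by right.
  left; rewrite /F /G /=; case: (leP (e / 2) `|f x|) => ?; [by left|right; lra].
apply: le_trans (measureU2 _ _ _) _ => //; first exact: measurableU.
by rewrite [X in (_ + X)%E]N0 adde0; exact: measureU2.
Qed.

Definition vanishing_in_prob w :=
  forall e, 0 < e -> (fun n => P [set x | e <= `|w n x|]) @ \oo --> 0%E.

Lemma vanishing_in_prob0 : vanishing_in_prob (fun _ _ => 0).
Proof.
move=> e e0; rewrite [X in X @ \oo --> _](_ : _ = cst 0%E); first exact: cvg_cst.
apply/funext => n /=; rewrite -(measure0 P); congr (P _).
by apply/seteqP; split => x //=; rewrite normr0 leNgt e0.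
Qed.

Lemma vanishing_in_prob_split w u v : (forall n, measurable_fun setT (u n)) ->
  (forall n, measurable_fun setT (v n)) -> (forall n, measurable_fun setT (w n)) ->
  (\forall n \near \oo, {ae P, forall x, `|w n x| <= `|u n x| + `|v n x|}) ->
  vanishing_in_prob u -> vanishing_in_prob v -> vanishing_in_prob w.
Proof.
move=> mu mv mw wuv cu cv e e0; have e20 : 0 < e / 2 by rewrite divr_gt0.
apply: (cvge0_squeeze (b := fun n =>
  P [set x | e / 2 <= `|u n x|]%R + P [set x | e / 2 <= `|v n x|]%R)%E).
- by move=> n; exact: measure_ge0.
- by apply: filterS wuv => n; exact: le_measure_norm_ge_split.
- by rewrite -(adde0 0%E); apply: cvgeD => //; [exact: cu|exact: cv].
Qed.

Lemma cvg_in_probE u f :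
  cvg_in_prob P u f = vanishing_in_prob (fun n x => u n x - f x).
Proof. by []. Qed.

Section measurable_sequences.
Variables (u v : nat -> T -> R) (f g : T -> R).
Hypotheses (mu : forall n, measurable_fun setT (u n))
  (mv : forall n, measurable_fun setT (v n))
  (mf : measurable_fun setT f) (mg : measurable_fun setT g).

Lemma cvg_in_prob_mul : (forall n, {ae P, forall x, `|v n x| <= 1}) ->
  {ae P, forall x, `|f x| <= 1} ->
  cvg_in_prob P u f -> cvg_in_prob P v g ->
  cvg_in_prob P (fun n x => u n x * v n x) (fun x => f x * g x).
Proof.
move=> v1 f1; rewrite !cvg_in_probE; apply: vanishing_in_prob_split.
- by move=> n; apply: measurable_funB.
- by move=> n; apply: measurable_funB.
- by move=> n; apply: measurable_funB; apply: measurable_funM.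
apply: nearW => n; apply: filterS2 (v1 n) f1 => x vx fx.
rewrite (_ : _ - _ = (u n x - f x) * v n x + f x * (v n x - g x)); last by ring.
apply: le_trans (ler_normD _ _) _; rewrite !normrM.
by apply: lerD; [rewrite -[leRHS]mulr1|rewrite -[leRHS]mul1r]; apply: ler_pM.
Qed.

Lemma cvg_in_prob_ae :
  (\forall n \near \oo, {ae P, forall x, u n x = v n x}) ->
  cvg_in_prob P u f -> cvg_in_prob P v f.
Proof.
move=> uv; rewrite !cvg_in_probE => cu.
apply: (vanishing_in_prob_split _ _ _ _ cu vanishing_in_prob0).
- by move=> n; apply: measurable_funB.
- by move=> n; exact: measurable_cst.
- by move=> n; apply: measurable_funB.
by apply: filterS uv => n; apply: filterS => x ->; rewrite normr0 addr0.
Qed.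

Lemma cvg_in_prob_unique : cvg_in_prob P u f -> cvg_in_prob P u g ->
  {ae P, forall x, f x = g x}.
Proof.
rewrite !cvg_in_probE => cf cg.
have fg0 : vanishing_in_prob (fun _ x => f x - g x).
  apply: (vanishing_in_prob_split _ _ _ _ cg cf).
  - by move=> n; apply: measurable_funB.
  - by move=> n; apply: measurable_funB.
  - by move=> n; apply: measurable_funB.
  apply: nearW => n; apply: aeW => x.
  rewrite (_ : _ - _ = (u n x - g x) - (u n x - f x)); last by ring.
  by rewrite -[`|u n x - f x|]normrN ler_normD.
have mfg k : measurable [set x | k.+1%:R^-1 <= `|f x - g x|].
  by apply: measurable_norm_ge; exact: measurable_funB.
suff : P.-negligible (\bigcup_k [set x | k.+1%:R^-1 <= `|f x - g x|]).
  apply: negligibleS => x /= /eqP; rewrite -subr_eq0 -normr_gt0 => /ltr_add_invr[k].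
  by rewrite add0r => /ltW ?; exists k.
apply: negligible_bigcup => k; apply/negligibleP => //.
have k_gt0 : 0 < k.+1%:R^-1 :> R by rewrite invr_gt0.
by move/cvg_lim : (fg0 _ k_gt0) => /(_ (@ereal_hausdorff R)); rewrite lim_cst.
Qed.

End measurable_sequences.

Lemma cvg_in_prob_ae_unique u v f g : (forall n, measurable_fun setT (u n)) ->
  (forall n, measurable_fun setT (v n)) ->
  measurable_fun setT f -> measurable_fun setT g ->
  (\forall n \near \oo, {ae P, forall x, u n x = v n x}) ->
  cvg_in_prob P u f -> cvg_in_prob P v g -> {ae P, forall x, f x = g x}.
Proof.
move=> mu mv mf mg uv cu; apply: cvg_in_prob_unique => //.
exact: cvg_in_prob_ae uv cu.
Qed.

Lemma prod_norm_le1_ae (J : Type) (s : seq J) (a : J -> T -> R) :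
  (forall j, {ae P, forall x, `|a j x| <= 1}) ->
  {ae P, forall x, `|\prod_(j <- s) a j x| <= 1}.
Proof.
move=> a1; elim: s => [|j s IH].
  by apply: aeW => x; rewrite big_nil normr1.
apply: filterS2 (a1 j) IH => x ajx asx.
by rewrite big_cons normrM; apply: mulr_ile1.
Qed.

Lemma cvg_in_prob_prod (J : eqType) (s : seq J) (a : nat -> J -> T -> R)
    (b : J -> T -> R) :
  (forall n j, measurable_fun setT (a n j)) ->
  (forall j, measurable_fun setT (b j)) ->
  (forall n j, {ae P, forall x, `|a n j x| <= 1}) ->
  (forall j, {ae P, forall x, `|b j x| <= 1}) ->
  (forall j, cvg_in_prob P (fun n => a n j) (b j)) ->
  cvg_in_prob P (fun n x => \prod_(j <- s) a n j x)
                (fun x => \prod_(j <- s) b j x).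
Proof.
move=> ma mb a1 b1 ab; elim: s => [|j s IH].
  rewrite cvg_in_probE (_ : (fun n x => _) = fun _ _ => 0).
    exact: vanishing_in_prob0.
  by apply/funext => n; apply/funext => x; rewrite !big_nil subrr.
rewrite (_ : (fun n x => _) = fun n x => a n j x * \prod_(i <- s) a n i x); last first.
  by apply/funext => n; apply/funext => x; rewrite big_cons.
rewrite (_ : (fun x => _) = fun x => b j x * \prod_(i <- s) b i x); last first.
  by apply/funext => x; rewrite big_cons.
apply: cvg_in_prob_mul => //.
- by move=> n; apply: measurable_prod => i _.
- by apply: measurable_prod => i _.
- by move=> n; exact: prod_norm_le1_ae.
Qed.

End convergence_in_probability.

Section condexp_indic_existence.
Context {d} {T : measurableType d} {R : realType} (P : probability T R).
Variable A : set (set T).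
Hypothesis hA : sigma_subfield P A.
(* T with the sigma-algebra A: completeness of A means A = <<s A `|` Pnull P >>. *)
Local Notation TA := (g_sigma_algebraType (A `|` Pnull P)).

Lemma measurable_TA : (measurable : set (set TA)) = A.
Proof. by rewrite [RHS](proj2 hA). Qed.

Lemma measurable_TA_sub (B : set TA) : measurable B -> measurable (B : set T).
Proof. by rewrite measurable_TA => /(proj1 hA). Qed.

Definition prob_on_TA : set TA -> \bar R := fun B => P B.

Let prob_on_TA0 : prob_on_TA set0 = 0%E. Proof. exact: measure0. Qed.
Let prob_on_TA_ge0 B : (0 <= prob_on_TA B)%E. Proof. exact: measure_ge0. Qed.
Let prob_on_TA_sigma_additive : semi_sigma_additive prob_on_TA.
Proof.
move=> F mF tF mUF; apply: (@measure_semi_sigma_additive _ _ _ P) => //.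
- by move=> n; exact: measurable_TA_sub.
- exact: measurable_TA_sub.
Qed.
HB.instance Definition _ := isMeasure.Build _ _ _ prob_on_TA
  prob_on_TA0 prob_on_TA_ge0 prob_on_TA_sigma_additive.
Let prob_on_TAT : prob_on_TA setT = 1%E. Proof. exact: probability_setT. Qed.
HB.instance Definition _ :=
  Measure_isProbability.Build _ _ _ prob_on_TA prob_on_TAT.

Lemma integral_prob_on_TA (B : set TA) (k : TA -> \bar R) : measurable B ->
  measurable_fun B k -> (forall x, B x -> (0 <= k x)%E) ->
  (\int[prob_on_TA]_(x in B) k x = \int[P]_(x in (B : set T)) k x)%E.
Proof.
move=> mB mk k0; have mid : measurable_fun setT (id : T -> TA).
  by move=> _ Y mY; rewrite setTI; exact: measurable_TA_sub.
rewrite (@eq_measure_integral _ _ _ _ (pushforward P (id : T -> TA))) //.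
by rewrite (ge0_integral_pushforward mid) // => y; rewrite inE; exact: k0.
Qed.

Variables (X : set T) (mX : measurable X).

Definition prob_on_TAI : set TA -> \bar R := fun B => P (B `&` X).

Let prob_on_TAI0 : prob_on_TAI set0 = 0%E.
Proof. by rewrite /prob_on_TAI set0I measure0. Qed.
Let prob_on_TAI_ge0 B : (0 <= prob_on_TAI B)%E. Proof. exact: measure_ge0. Qed.
Let prob_on_TAI_sigma_additive : semi_sigma_additive prob_on_TAI.
Proof.
move=> F mF tF mUF; rewrite /prob_on_TAI setI_bigcupl.
apply: (@measure_semi_sigma_additive _ _ _ P).
- by move=> n; apply: measurableI => //; exact: measurable_TA_sub.
- apply/trivIsetP => i j _ _ ij; rewrite setIACA setIid.
  by move/trivIsetP: tF => /(_ i j I I ij) ->; rewrite set0I.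
- by rewrite -setI_bigcupl; apply: measurableI => //; exact: measurable_TA_sub.
Qed.
HB.instance Definition _ := isMeasure.Build _ _ _ prob_on_TAI
  prob_on_TAI0 prob_on_TAI_ge0 prob_on_TAI_sigma_additive.
Let prob_on_TAI_fin B : measurable B -> prob_on_TAI B \is a fin_num.
Proof.
move=> mB; rewrite ge0_fin_numE ?measure_ge0 //.
apply: (le_lt_trans (probability_le1 P _)); last by rewrite ltey.
by apply: measurableI => //; exact: measurable_TA_sub.
Qed.
HB.instance Definition _ := Measure_isFinite.Build _ _ _ prob_on_TAI
  prob_on_TAI_fin.

Lemma prob_on_TAI_dominates : prob_on_TAI `<< prob_on_TA.
Proof.
move=> N /= NN B mB BN; apply/eqP; rewrite -measure_le0 -(NN B mB BN).
apply: le_measure; rewrite ?inE; [|exact: measurable_TA_sub|exact: subIsetl].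
by apply: measurableI => //; exact: measurable_TA_sub.
Qed.

Local Notation rn := (Radon_Nikodym_SigmaFinite.f prob_on_TAI prob_on_TA).

(* The density of B |-> P (B `&` X) with respect to P, both restricted to A,
   is a version of P_A 1_X. *)
Lemma condexp_indic_exists : exists g, is_condexp P A \1_X g.
Proof.
have rn0 := Radon_Nikodym_SigmaFinite.f_ge0 prob_on_TAI_dominates.
have rnE x : (fine (rn x))%:E = rn x.
  by rewrite fineK // Radon_Nikodym_SigmaFinite.f_fin_num //;
    exact: prob_on_TAI_dominates.
have mrn : measurable_fun setT rn.
  apply: measurable_int.
  exact: Radon_Nikodym_SigmaFinite.f_integrable prob_on_TAI_dominates.
have mfrn : measurable_fun setT (fine \o rn : TA -> R) by exact: measurableT_comp.
have rn_integral (B : set TA) : measurable B ->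
    (\int[P]_(x in (B : set T)) rn x = P (B `&` X))%E.
  move=> mB; rewrite -integral_prob_on_TA //; last exact: measurable_funTS.
  rewrite -Radon_Nikodym_SigmaFinite.f_integral //.
  exact: prob_on_TAI_dominates.
exists (fine \o rn); split.
- by move=> Y mY; have := mfrn measurableT Y mY; rewrite setTI measurable_TA.
- apply/integrableP; split.
    apply/measurable_EFinP => _ Y mY; rewrite setTI.
    by apply: measurable_TA_sub; rewrite -[_ @^-1` _]setTI; exact: mfrn.
  rewrite (eq_integral (rn : T -> \bar R)); last first.
    by move=> x _; rewrite /= ger0_norm ?rnE // fine_ge0.
  rewrite (rn_integral setT) // (le_lt_trans (probability_le1 P _)) ?ltey //.
  by apply: measurableI => //; exact: measurable_TA_sub.
- move=> B AB; rewrite integral_indic //; last exact: (proj1 hA _ AB).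
  rewrite (eq_integral (rn : T -> \bar R)); last by move=> x _; rewrite /= rnE.
  by rewrite setIC rn_integral // measurable_TA.
Qed.

End condexp_indic_existence.

Lemma condexp_indicP {d} {T : measurableType d} {R : realType}
  (P : probability T R) (A : set (set T)) (X : set T) :
  sigma_subfield P A -> measurable X -> is_condexp P A \1_X (condexp P A \1_X).
Proof. by move=> hA mX; apply: xgetPex; exact: condexp_indic_exists. Qed.

Section finite_measure_integral_bounds.
Context {d} {T : measurableType d} {R : realType}
  (mu : {finite_measure set T -> \bar R}).
Variables (E : set T) (f : T -> R) (c : R).
Hypotheses (mE : measurable E) (intf : mu.-integrable E (EFin \o f)).

Lemma cst_mul_le_integral : (forall x, E x -> c <= f x) ->
  (c%:E * mu E <= \int[mu]_(x in E) (f x)%:E)%E.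
Proof.
move=> cf; rewrite -integral_cst //; apply: le_integral => //.
  exact: finite_measure_integrable_cst.
by move=> x; rewrite inE => /cf; rewrite lee_fin.
Qed.

Lemma integral_le_cst_mul : (forall x, E x -> f x <= c) ->
  (\int[mu]_(x in E) (f x)%:E <= c%:E * mu E)%E.
Proof.
move=> fc; rewrite -integral_cst //; apply: le_integral => //.
  exact: finite_measure_integrable_cst.
by move=> x; rewrite inE => /fc; rewrite lee_fin.
Qed.

End finite_measure_integral_bounds.

Section condexp_indic.
Context {d} {T : measurableType d} {R : realType} (P : probability T R).
Variable A : set (set T).
Hypothesis hA : sigma_subfield P A.
Local Notation TA := (g_sigma_algebraType (A `|` Pnull P)).
Local Notation cexp X := (condexp P A \1_X).
Implicit Types (X Y E : set T) (g h : T -> R) (e : R).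

Lemma sub_measurableP g : sub_measurable A g <-> measurable_fun [set: TA] g.
Proof.
split=> [sg _ Y mY|mg Y mY].
  by rewrite setTI measurable_TA //; exact: sg.
by have := mg measurableT Y mY; rewrite setTI measurable_TA.
Qed.

Lemma sub_measurableB g h : sub_measurable A g -> sub_measurable A h ->
  sub_measurable A (fun x => g x - h x).
Proof.
move=> /sub_measurableP mg /sub_measurableP mh.
exact/sub_measurableP/measurable_funB.
Qed.

Lemma sub_measurable_ge g e : sub_measurable A g -> A [set x | e <= g x].
Proof.
move=> sg; rewrite (_ : [set x | _] = g @^-1` `[e, +oo[); first exact: sg.
by apply/seteqP; split => x /=; rewrite in_itv /= andbT.
Qed.

Lemma sub_measurable_le g e : sub_measurable A g -> A [set x | g x <= e].
Proof.
move=> sg; rewrite (_ : [set x | _] = g @^-1` `]-oo, e]); first exact: sg.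
by apply/seteqP; split => x /=; rewrite in_itv.
Qed.

Lemma sub_measurable_condexp_indic X : measurable X -> sub_measurable A (cexp X).
Proof. by move=> mX; have [] := condexp_indicP hA mX. Qed.

Lemma measurable_condexp_indic X : measurable X -> measurable_fun setT (cexp X).
Proof.
move=> /sub_measurable_condexp_indic sX _ Y mY.
by rewrite setTI; apply: (proj1 hA); exact: sX.
Qed.

Lemma integrable_condexp_indic X E : measurable X -> measurable E ->
  P.-integrable E (EFin \o cexp X).
Proof.
move=> mX mE; apply: (integrableS measurableT) => //.
by have [] := condexp_indicP hA mX.
Qed.

Lemma integral_condexp_indic X E : measurable X -> A E ->
  (\int[P]_(x in E) (cexp X x)%:E = P (X `&` E))%E.
Proof.
move=> mX AE; have [_ _ ->] := condexp_indicP hA mX => //.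
by rewrite integral_indic //; exact: (proj1 hA).
Qed.

Lemma condexp_indic_ge_null X E c : measurable X -> A E -> 1 < c ->
  (forall x, E x -> c <= cexp X x) -> P E = 0%E.
Proof.
move=> mX AE c1 cE; have mE := proj1 hA _ AE.
have := cst_mul_le_integral mE (integrable_condexp_indic mX mE) cE.
rewrite integral_condexp_indic // => /le_trans/(_ (measureIr _ mX mE)) cPE.
have fE : P E \is a fin_num by exact: fin_num_measure.
have PE0 : 0 <= fine (P E) by rewrite fine_ge0 ?measure_ge0.
have {}cPE : c * fine (P E) <= fine (P E) by rewrite -lee_fin EFinM fineK.
suff PE : fine (P E) = 0 by rewrite -(fineK fE) PE.
nra.
Qed.

Lemma condexp_indic_le_null X E c : measurable X -> A E -> c < 0 ->
  (forall x, E x -> cexp X x <= c) -> P E = 0%E.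
Proof.
move=> mX AE c0 Ec; have mE := proj1 hA _ AE.
have := integral_le_cst_mul mE (integrable_condexp_indic mX mE) Ec.
rewrite integral_condexp_indic // => /(le_trans (measure_ge0 _ _)) cPE.
have fE : P E \is a fin_num by exact: fin_num_measure.
have PE0 : 0 <= fine (P E) by rewrite fine_ge0 ?measure_ge0.
have {}cPE : 0 <= c * fine (P E) by rewrite -lee_fin EFinM fineK.
suff PE : fine (P E) = 0 by rewrite -(fineK fE) PE.
nra.
Qed.

Lemma condexp_indic_norm_le1 X : measurable X ->
  {ae P, forall x, `|cexp X x| <= 1}.
Proof.
move=> mX; have sX := sub_measurable_condexp_indic mX.
have ge_m1 : {ae P, forall x, -1 <= cexp X x}.
  exists [set x | cexp X x <= -1]; split.
  - exact: (proj1 hA _ (sub_measurable_le _ sX)).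
  - apply: (condexp_indic_le_null (c := -1) mX) => //.
    exact: sub_measurable_le.
  - by move=> x /= /negP; rewrite -ltNge => /ltW.
have le_1 : {ae P, forall x, cexp X x <= 1}.
  apply: (@negligibleS _ _ _ _
    (\bigcup_k [set x | 1 + k.+1%:R^-1 <= cexp X x])).
    move=> x /= /negP; rewrite -ltNge => /ltr_add_invr[k /ltW ?].
    by exists k.
  apply: negligible_bigcup => k; apply/negligibleP.
    exact: (proj1 hA _ (sub_measurable_ge _ sX)).
  apply: (condexp_indic_ge_null (c := 1 + k.+1%:R^-1) mX) => //.
    exact: sub_measurable_ge.
  by rewrite ltrDl invr_gt0.
by apply: filterS2 ge_m1 le_1 => x ? ?; rewrite ler_norml; apply/andP.
Qed.

Lemma condexp_indic_diff_le X Y e : measurable X -> measurable Y ->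
  (e%:E * P [set x | e <= cexp X x - cexp Y x]%R <= P (X `\` Y))%E.
Proof.
move=> mX mY; set E := [set x | _].
have AE : A E.
  by apply/sub_measurable_ge/sub_measurableB; exact: sub_measurable_condexp_indic.
have mE := proj1 hA _ AE.
have iX := integrable_condexp_indic mX mE.
have iY := integrable_condexp_indic mY mE.
apply: le_trans (cst_mul_le_integral (f := fun x => cexp X x - cexp Y x) mE _ _) _.
- rewrite (_ : EFin \o _ = ((EFin \o cexp X) \- (EFin \o cexp Y))%E).
    exact: integrableB.
  by apply/funext => x /=; rewrite EFinB.
- by [].
rewrite (eq_integral (fun x => (cexp X x)%:E - (cexp Y x)%:E)%E); last first.
  by move=> x _; rewrite EFinB.
rewrite integralB_EFin // !integral_condexp_indic //.
rewrite leeBlDr ?fin_num_measure //; last exact: measurableI.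
apply: le_trans (measureU2 _ _ _); [|exact: measurableD|exact: measurableI].
apply: le_measure; rewrite ?inE; [exact: measurableI| |].
  by apply: measurableU; [exact: measurableD|exact: measurableI].
by move=> x [Xx Ex]; have [Yx|nYx] := pselect (Y x); [right|left].
Qed.

Lemma condexp_indic_dist_le X Y e : measurable X -> measurable Y -> 0 <= e ->
  (e%:E * P [set x | e <= `|cexp X x - cexp Y x|]%R <=
   P (X `\` Y) + P (Y `\` X))%E.
Proof.
move=> mX mY e0.
have mdiff Z W : measurable Z -> measurable W ->
    measurable [set x | e <= cexp Z x - cexp W x].
  move=> mZ mW; apply: (proj1 hA); apply/sub_measurable_ge/sub_measurableB;
  exact: sub_measurable_condexp_indic.
apply: le_trans
  (leeD (condexp_indic_diff_le e mX mY) (condexp_indic_diff_le e mY mX)).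
rewrite -muleDr ?ge0_adde_def ?inE ?measure_ge0 //.
apply: lee_wpmul2l; rewrite ?lee_fin //.
apply: le_trans (measureU2 _ _ _); [|exact: mdiff|exact: mdiff].
apply: le_measure; rewrite ?inE; [|by apply: measurableU; exact: mdiff|].
  apply: measurable_norm_ge; apply: measurable_funB;
  exact: measurable_condexp_indic.
by move=> x /=; rewrite ler_normr opprB => /orP[]; [left|right].
Qed.

End condexp_indic.

Section approximation.
Context {d} {T : measurableType d} {R : realType} (P : probability T R).

Lemma le_measure_bigcup_ord k (F : 'I_k -> set T) (E : set T) : measurable E ->
  (forall m, measurable (F m)) -> E `<=` \bigcup_(m in [set: 'I_k]) F m ->
  (P E <= \sum_(m < k) P (F m))%E.
Proof.
move=> mE mF EF; pose G (i : nat) := if insub i is Some m then F m else set0.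
have -> : (\sum_(m < k) P (F m) = \sum_(m < k) P (G m))%E.
  by apply: eq_bigr => m _; rewrite /G valK.
apply: (@content_subadditive _ _ _ P) => //.
- by move=> i _; rewrite /G; case: insubP.
- move=> x /EF [m _ Fmx]; rewrite -bigcup_mkord; exists (val m) => //=.
  by rewrite /G valK.
Qed.

Lemma measurable_bigcap_ord k (Z : 'I_k -> set T) : (forall m, measurable (Z m)) ->
  measurable (\bigcap_(m in [set: 'I_k]) Z m).
Proof. by move=> mZ; apply: fin_bigcap_measurable => //; exact: finite_setT. Qed.

Lemma measure_bigcapD_cvg0 k (X Y : nat -> 'I_k -> set T) :
  (forall n m, measurable (X n m)) -> (forall n m, measurable (Y n m)) ->
  (forall m, (fun n => P (X n m `\` Y n m)) @ \oo --> 0%E) ->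
  (fun n => P ((\bigcap_(m in [set: 'I_k]) X n m) `\`
               \bigcap_(m in [set: 'I_k]) Y n m)) @ \oo --> 0%E.
Proof.
move=> mX mY XY.
apply: (cvge0_squeeze (b := fun n => \sum_(m < k) P (X n m `\` Y n m))%E).
- by move=> n; exact: measure_ge0.
- apply: nearW => n; apply: le_measure_bigcup_ord => [|m|x [Xx]].
  + by apply: measurableD; exact: measurable_bigcap_ord.
  + exact: measurableD.
  move=> /existsNP[m /not_implyP[_ nYx]]; exists m => //.
  by split => //; exact: Xx.
- have : (fun n => \sum_(m < k) P (X n m `\` Y n m)) @ \oo -->
      (\sum_(m < k) (0 : \bar R))%E.
    apply: cvg_nnesum => m _; last exact: XY.
    by apply: nearW => n; exact: measure_ge0.
  by rewrite big1_eq.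
Qed.

Lemma weak_cvg_approx (B : nat -> set (set T)) (B0 : set (set T)) (S : set T) :
  (forall n, sigma_subfield P (B n)) -> weak_cvg P B B0 -> B0 S -> measurable S ->
  exists Sn : nat -> set T, [/\ forall n, B n (Sn n),
    (fun n => P (Sn n `\` S)) @ \oo --> 0%E &
    (fun n => P (S `\` Sn n)) @ \oo --> 0%E].
Proof.
move=> hB hW BS mS.
pose far n := [set x | 2^-1 <= `|condexp P (B n) \1_S x - \1_S x|].
have mfar n : measurable (far n).
  apply: measurable_norm_ge; apply: measurable_funB.
    exact: measurable_condexp_indic.
  exact: measurable_indic.
have far0 : (fun n => P (far n)) @ \oo --> 0%E.
  by apply: hW; rewrite // invr_gt0.
pose Sn n := [set x | 2^-1 <= condexp P (B n) \1_S x].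
have BSn n : B n (Sn n).
  by apply: sub_measurable_ge; exact: sub_measurable_condexp_indic.
have mSn n : measurable (Sn n) by exact: (proj1 (hB n) _ (BSn n)).
exists Sn; split => //.
- apply: (cvge0_squeeze _ _ far0) => [n|]; first exact: measure_ge0.
  apply: nearW => n; apply: le_measure; rewrite ?inE //; first exact: measurableD.
  move=> x [/= Snx Sx]; rewrite /far /= indicE memNset // subr0.
  by rewrite (le_trans Snx) // ler_norm.
- apply: (cvge0_squeeze _ _ far0) => [n|]; first exact: measure_ge0.
  apply: nearW => n; apply: le_measure; rewrite ?inE //; first exact: measurableD.
  move=> x [Sx /= /negP]; rewrite -ltNge /far /= indicE mem_set //= => lt_half.
  by rewrite distrC (le_trans _ (ler_norm _)) //; lra.
Qed.

Lemma cvg_in_prob_condexp_indic (C : nat -> set (set T)) (C0 : set (set T))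
    (X : nat -> set T) (X0 : set T) :
  (forall n, sigma_subfield P (C n)) -> sigma_subfield P C0 ->
  (forall n, measurable (X n)) -> measurable X0 -> strong_cvg P C C0 ->
  (fun n => P (X n `\` X0)) @ \oo --> 0%E ->
  (fun n => P (X0 `\` X n)) @ \oo --> 0%E ->
  cvg_in_prob P (fun n => condexp P (C n) \1_(X n)) (condexp P C0 \1_X0).
Proof.
move=> hC hC0 mX mX0 hS XX0 X0X.
have mc n Z : measurable Z -> measurable_fun setT (condexp P (C n) \1_Z).
  exact: measurable_condexp_indic.
rewrite cvg_in_probE; apply: (@vanishing_in_prob_split _ _ _ _ _
  (fun n x => condexp P (C n) \1_(X n) x - condexp P (C n) \1_X0 x)
  (fun n x => condexp P (C n) \1_X0 x - condexp P C0 \1_X0 x)).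
- by move=> n; apply: measurable_funB; exact: mc.
- by move=> n; apply: measurable_funB; [exact: mc|exact: measurable_condexp_indic].
- by move=> n; apply: measurable_funB; [exact: mc|exact: measurable_condexp_indic].
- apply: nearW => n; apply: aeW => x.
  by rewrite (le_trans _ (ler_normD _ _)) // addrA subrK.
- move=> e e0.
  apply: (cvge0_squeeze (b := fun n =>
    (e^-1)%:E * (P (X n `\` X0) + P (X0 `\` X n)))%E) => [n||].
  + exact: measure_ge0.
  + apply: nearW => n; rewrite lee_pdivlMl //.
    exact: (condexp_indic_dist_le (hC n) (mX n) mX0 (ltW e0)).
  rewrite (_ : 0%E = (e^-1)%:E * (0 + 0))%E; last by rewrite adde0 mule0.
  by apply: cvgeZl => //; apply: cvgeD.
- exact: hS.
Qed.

End approximation.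

Local Close Scope ring_scope.
Local Close Scope classical_set_scope.
Unset Implicit Arguments.

Theorem proposition3p1 (d : measure_display) (T : measurableType d)
  (R : realType) (P : probability T R)
  (C : nat -> set (set T)) (I : Type) (B : nat -> I -> set (set T)) :
  (forall n, sigma_subfield P (C n)) ->
  (forall n i, sigma_subfield P (B n i)) ->
  strong_cvg P C (C 0) ->
  (forall i, weak_cvg P (fun n => B n i) (B 0 i)) ->
  (forall n, (0 < n)%N -> cond_indep P (B n) (C n)) ->
  cond_indep P (B 0) (C 0).
Proof.
move=> hC hB hS hW hI k j jinj S BS.
have mS m : measurable (S m) by exact: (proj1 (hB 0 (j m))).
have /choice[Sn SnP] m :=
  weak_cvg_approx (fun n => hB n (j m)) (hW (j m)) (BS m) (mS m).
have mSn m n : measurable (Sn m n).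
  by have [BSn _ _] := SnP m; exact: (proj1 (hB n (j m)) _ (BSn n)).
have mc n Z : measurable Z -> measurable_fun setT (condexp P (C n) \1_Z)%R.
  exact: measurable_condexp_indic.
have cvg_cap : cvg_in_prob P
    (fun n => condexp P (C n) \1_(\bigcap_(m in setT) Sn m n)%classic)%R
    (condexp P (C 0) \1_(\bigcap_(m in setT) S m)%classic)%R.
  apply: cvg_in_prob_condexp_indic => //.
  - by move=> n; exact: measurable_bigcap_ord.
  - exact: measurable_bigcap_ord.
  - by apply: measure_bigcapD_cvg0 => // m; have [] := SnP m.
  - by apply: measure_bigcapD_cvg0 => // m; have [] := SnP m.
have cvg_prod : cvg_in_prob P
    (fun n x => \prod_(m < k) condexp P (C n) \1_(Sn m n) x)%R
    (fun x => \prod_(m < k) condexp P (C 0) \1_(S m) x)%R.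
  apply: cvg_in_prob_prod => [n m|m|n m|m|m]; try exact: mc;
    try exact: condexp_indic_norm_le1.
  by have [_ ? ?] := SnP m; exact: cvg_in_prob_condexp_indic.
apply: (cvg_in_prob_ae_unique _ _ _ _ _ cvg_cap cvg_prod) => [n|n|||].
- by apply: mc; exact: measurable_bigcap_ord.
- by apply: measurable_prod => m _; exact: mc.
- by apply: mc; exact: measurable_bigcap_ord.
- by apply: measurable_prod => m _; exact: mc.
- by exists 1%N => // n /= n1; apply: (hI n n1 k j jinj) => m; have [] := SnP m.
Qed.
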